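(* Let $a(j,x)\ge0$, $j=1,\dots,N$, be densities with respect to $\mu$, $b\ge0$ a function, and $\beta_j=\int a(j,x)b(x)\,d\mu(x)$. Let $(\rho(j,\cdot))_{j}$ be proposal densities and $M_j\ge\sup_x a(j,x)b(x)/\rho(j,x)$ bounds, and let $(\tau_j)$ be a probability distribution on $\{1,\dots,N\}$ with all $\tau_j>0$. Consider the accept–reject scheme which draws $J\sim(\tau_j)$, then $X\sim\rho(J,\cdot)$, and accepts $(J,X)=(j,x)$ with probability $\pi(j,x)=\frac{a(j,x)b(x)}{M\tau_j\rho(j,x)}$, where $M=\max_j M_j/\tau_j$. Then the average acceptance probability is at most $\sum_j\beta_j/\sum_jM_j$, with equality if and only if $\tau_j\propto M_j$.
   Context: The scheme targets the density $f^N(x)\propto b(x)\sum_{j=1}^Na(j,x)$; the average acceptance probability is $\sum_j\int\pi(j,x)\tau_j\rho(j,x)\,d\mu(x)$. *)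

From HB Require Import structures.
From mathcomp Require Import all_boot all_order all_algebra.
From mathcomp Require Import all_classical all_reals all_analysis.
Set Implicit Arguments. Unset Strict Implicit. Unset Printing Implicit Defensive.
Import Order.TTheory GRing.Theory Num.Theory.
Local Open Scope ring_scope.


Definition is_density (d : measure_display) (T : measurableType d) (R : realType)
  (mu : {measure set T -> \bar R}) (f : T -> R) : Prop :=
  [/\ measurable_fun setT f, (forall x, (0 <= f x)%R)
    & (\int[mu]_x (f x)%:E = 1)%E].

Definition beta (d : measure_display) (T : measurableType d) (R : realType)
  (mu : {measure set T -> \bar R}) (N : nat) (a : 'I_N -> T -> R) (b : T -> R)
  (j : 'I_N) : \bar R :=
  \int[mu]_x (a j x * b x)%:E.

(* M = max_j M_j / tau_j  (all M_j / tau_j are >= 0 under the hypotheses) *)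
Definition Mmax (R : realType) (N : nat) (Mb tau : 'I_N -> R) : R :=
  \big[Num.max/0%R]_(j < N) (Mb j / tau j).

(* acceptance probability pi(j,x) = a(j,x) b(x) / (M tau_j rho(j,x))
   (MathComp convention: division by 0 yields 0) *)
Definition accept_prob (R : realType) (T : Type) (N : nat)
  (a rho : 'I_N -> T -> R) (b : T -> R) (Mb tau : 'I_N -> R)
  (j : 'I_N) (x : T) : R :=
  (a j x * b x / (Mmax Mb tau * tau j * rho j x))%R.

Definition avg_accept (d : measure_display) (T : measurableType d) (R : realType)
  (mu : {measure set T -> \bar R}) (N : nat)
  (a rho : 'I_N -> T -> R) (b : T -> R) (Mb tau : 'I_N -> R) : \bar R :=
  (\sum_(j < N) \int[mu]_x (accept_prob a rho b Mb tau j x * tau j * rho j x)%:E)%E.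

(** The acceptance probability at (j, x) times the proposal mass tau_j rho(j, x)
    is a(j, x) b(x) / M, so the average acceptance probability equals
    (sum_j beta_j) / M.  Since tau is a probability vector, M = max_j M_j / tau_j
    dominates the tau-average sum_j M_j of the ratios M_j / tau_j, with equality
    exactly when all these ratios coincide, i.e. when tau is proportional to M_j. *)
From HB Require Import structures.
From mathcomp Require Import all_boot all_order all_algebra.
From mathcomp Require Import all_classical all_reals all_analysis.
From mathcomp Require Import measurable_realfun ring.
Set Implicit Arguments. Unset Strict Implicit. Unset Printing Implicit Defensive.
Import Order.TTheory GRing.Theory Num.Theory.
Local Open Scope ring_scope.

Section Mmax.
Variables (R : realType) (N : nat) (m t : 'I_N -> R).

Lemma le_Mmax j : m j / t j <= Mmax m t.
Proof. exact: (le_bigmax 0 (fun j => m j / t j) j). Qed.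

Hypotheses (t_gt0 : forall j, 0 < t j) (t_sum1 : \sum_j t j = 1).

Lemma le_Mmax_mul j : m j <= Mmax m t * t j.
Proof. by rewrite -ler_pdivrMr ?le_Mmax. Qed.

Lemma sum_le_Mmax : \sum_j m j <= Mmax m t.
Proof.
rewrite -[leRHS]mulr1 -t_sum1 mulr_sumr.
by apply: ler_sum => j _; exact: le_Mmax_mul.
Qed.

Lemma Mmax_eq_sum_iff : 0 < \sum_j m j ->
  Mmax m t = \sum_j m j <-> exists c : R, forall j, t j = c * m j.
Proof.
move=> m_gt0; split=> [Mmax_eq | [c t_prop]].
- have gap0 j : Mmax m t * t j - m j = 0.
    apply: (psumr_eq0P (F := fun j => Mmax m t * t j - m j)) j isT => [j _|].
      by rewrite subr_ge0 le_Mmax_mul.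
    by rewrite sumrB -mulr_sumr t_sum1 mulr1 Mmax_eq subrr.
  exists (Mmax m t)^-1 => j.
  by rewrite -[m j](subr0_eq (gap0 j)) mulKf // Mmax_eq gt_eqF.
- have c_sum : c * \sum_j m j = 1.
    by rewrite mulr_sumr -t_sum1; apply: eq_bigr => j _; rewrite t_prop.
  have c_neq0 : c != 0 by apply: contra_eq_neq c_sum => ->; rewrite mul0r eq_sym oner_neq0.
  have ratio j : m j / t j = \sum_j m j.
    have m_neq0 : m j != 0.
      by apply: contra_eq_neq (t_prop j) => ->; rewrite mulr0 gt_eqF.
    rewrite t_prop invfM mulrCA divff // mulr1.
    by apply: (mulfI c_neq0); rewrite divff.
  apply/le_anti; rewrite sum_le_Mmax andbT.
  by apply: bigmax_le => [|j _]; rewrite ?ratio // ltW.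
Qed.

End Mmax.

Section density_bound.
Variables (d : measure_display) (T : measurableType d) (R : realType).
Variables (mu : {measure set T -> \bar R}) (rho : T -> R).
Hypothesis rho_density : is_density mu rho.

Lemma density_scale_ge0 (M : R) : (forall x, 0 <= M * rho x) -> 0 <= M.
Proof.
case: rho_density => _ rho_ge0 rho_int1 Mrho_ge0; rewrite leNgt; apply/negP => M_lt0.
have rho0 x : rho x = 0.
  by apply/eqP; rewrite eq_le rho_ge0 andbT -(nmulr_rge0 _ M_lt0).
move: rho_int1; under eq_integral do rewrite rho0.
by rewrite integral0 => /eqP; rewrite eq_sym onee_eq0.
Qed.

Lemma integral_le_density_bound (f : T -> R) (M : R) :
  measurable_fun setT f -> (forall x, 0 <= f x) -> (forall x, f x <= M * rho x) ->
  (\int[mu]_x (f x)%:E <= M%:E)%E.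
Proof.
case: rho_density => rho_meas rho_ge0 rho_int1 f_meas f_ge0 f_le.
have M_ge0 : 0 <= M by apply: density_scale_ge0 => x; exact: le_trans (f_le x).
apply: (@le_trans _ _ (\int[mu]_x (M%:E * (rho x)%:E))%E).
  apply: ge0_le_integral => //.
  - by move=> x _; rewrite lee_fin.
  - exact/measurable_EFinP.
  - by apply/measurable_EFinP; exact: measurable_funM.
  - by move=> x _; rewrite -EFinM lee_fin.
rewrite ge0_integralZl_EFin ?rho_int1 ?mule1 //; last exact/measurable_EFinP.
by move=> x _; rewrite lee_fin.
Qed.

End density_bound.

Section acceptance.
Variables (d : measure_display) (T : measurableType d) (R : realType).
Variables (mu : {measure set T -> \bar R}) (N : nat).
Variables (a rho : 'I_N -> T -> R) (b : T -> R) (Mb tau : 'I_N -> R).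
Hypotheses (tau_gt0 : forall j, 0 < tau j) (Mmax_gt0 : 0 < Mmax Mb tau).
Hypothesis ab_ge0 : forall j x, 0 <= a j x * b x.
Hypothesis ab_le : forall j x, a j x * b x <= Mb j * rho j x.

Lemma accept_prob_mass j x :
  accept_prob a rho b Mb tau j x * tau j * rho j x = (Mmax Mb tau)^-1 * (a j x * b x).
Proof.
rewrite /accept_prob; have [rho0|rho_neq0] := eqVneq (rho j x) 0.
  have ab0 : a j x * b x = 0.
    by apply/eqP; rewrite eq_le ab_ge0 andbT -(mulr0 (Mb j)) -rho0.
  by rewrite rho0 ab0 !(mulr0, mul0r).
by field; rewrite rho_neq0 !gt_eqF.
Qed.

Hypothesis ab_meas : forall j, measurable_fun setT (fun x => a j x * b x).

Lemma avg_accept_eq :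
  (avg_accept mu a rho b Mb tau = ((Mmax Mb tau)^-1)%:E * \sum_(j < N) beta mu a b j)%E.
Proof.
rewrite ge0_sume_distrr => [|j _]; last by apply: integral_ge0 => x _; rewrite lee_fin.
apply: eq_bigr => j _; under eq_integral do rewrite accept_prob_mass EFinM.
apply: ge0_integralZl_EFin => //; last by rewrite invr_ge0 ltW.
- by move=> x _; rewrite lee_fin.
- exact/measurable_EFinP.
Qed.

End acceptance.

Local Open Scope ereal_scope.

Theorem lemma1 (d : measure_display) (T : measurableType d) (R : realType)
  (mu : {measure set T -> \bar R}) (N : nat)
  (a rho : 'I_N -> T -> R) (b : T -> R) (Mb tau : 'I_N -> R) :
  (0 < N)%N ->
  (forall j, is_density mu (a j)) ->
  measurable_fun setT b -> (forall x, (0 <= b x)%R) ->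
  (forall j, is_density mu (rho j)) ->
  (forall j x, (a j x * b x <= Mb j * rho j x)%R) ->
  (forall j, (0 < tau j)%R) -> (\sum_(j < N) tau j)%R = 1%R ->
  0 < \sum_(j < N) beta mu a b j ->
  avg_accept mu a rho b Mb tau
    <= (\sum_(j < N) beta mu a b j) * ((\sum_(j < N) Mb j)^-1)%:E
  /\
  (avg_accept mu a rho b Mb tau
     = (\sum_(j < N) beta mu a b j) * ((\sum_(j < N) Mb j)^-1)%:E
   <-> exists c : R, forall j, tau j = (c * Mb j)%R).
Proof.
(* [0 < N] is implied by the positivity of [\sum_j beta_j]. *)
move=> _ a_density b_meas b_ge0 rho_density ab_le tau_gt0 tau_sum1 beta_sum_gt0.
have ab_ge0 j x : (0 <= a j x * b x)%R.
  by apply: mulr_ge0 => //; case: (a_density j).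
have ab_meas j : measurable_fun setT (fun x => a j x * b x)%R.
  by apply: measurable_funM => //; case: (a_density j).
have beta_le j : beta mu a b j <= (Mb j)%:E.
  exact: (integral_le_density_bound (rho_density j) (ab_meas j) (ab_ge0 j) (ab_le j)).
have betaE j : beta mu a b j = (fine (beta mu a b j))%:E.
  rewrite fineK // ge0_fin_numE ?(le_lt_trans (beta_le j)) ?ltry //.
  by apply: integral_ge0 => x _; rewrite lee_fin.
set B := fine \o beta mu a b.
have sumB_gt0 : (0 < \sum_j B j)%R.
  by rewrite -lte_fin -sumEFin -(eq_bigr _ (fun j _ => betaE j)).
have sumB_le : (\sum_j B j <= \sum_j Mb j)%R by apply: ler_sum => j _; rewrite -lee_fin -betaE.
have sumMb_gt0 := lt_le_trans sumB_gt0 sumB_le.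
have sumMb_le := sum_le_Mmax Mb tau_gt0 tau_sum1.
rewrite avg_accept_eq // ?(lt_le_trans sumMb_gt0) //.
rewrite (eq_bigr _ (fun j _ => betaE j)) sumEFin -!EFinM lee_fin; split.
  by rewrite mulrC ler_pM2l // lef_pV2 ?posrE // (lt_le_trans sumMb_gt0).
rewrite -(Mmax_eq_sum_iff tau_gt0 tau_sum1 sumMb_gt0) mulrC; split => [[]|->] //.
by move/(mulfI (lt0r_neq0 sumB_gt0))/invr_inj.
Qed.
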